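(* Let $((A,\cdot),N)$ be a Nijenhuis algebra and $((M,\triangleright,\triangleleft),N_M)$ a Nijenhuis bimodule over it. Then for every $n\ge0$ and every $f\in C^n_{\mathrm{Hoch}}(A;M)$ we have $d_{N,N_M}(\partial^{N,N_M}(f))=\partial^{N,N_M}(\delta_{\mathrm{Hoch}}(f))$.
   Context: Over a field of characteristic $0$. Nijenhuis algebra: associative $(A,\cdot)$ with linear $N$, $N(a)N(b)=N(N(a)b+aN(b)-N(ab))$. Nijenhuis bimodule: $A$-bimodule $(M,\triangleright,\triangleleft)$ with linear $N_M$ such that $N(a)\triangleright N_M(u)=N_M(N(a)\triangleright u+a\triangleright N_M(u)-N_M(a\triangleright u))$ and $N_M(u)\triangleleft N(a)=N_M(N_M(u)\triangleleft a+u\triangleleft N(a)-N_M(u\triangleleft a))$. $C^n_{\mathrm{Hoch}}(A;M)=\mathrm{Hom}(A^{\otimes n},M)$ ($C^0=M$), with $\delta_{\mathrm{Hoch}}(u)(a)=a\triangleright u-u\triangleleft a$ and, for $n\ge1$, $(\delta_{\mathrm{Hoch}}f)(a_1,\dots,a_{n+1})=a_1\triangleright f(a_2,\dots,a_{n+1})+\sum_{i=1}^n(-1)^if(a_1,\dots,a_ia_{i+1},\dots,a_{n+1})+(-1)^{n+1}f(a_1,\dots,a_n)\triangleleft a_{n+1}$. The map $d_{N,N_M}:\mathrm{Hom}(A^{\otimes n},M)\to\mathrm{Hom}(A^{\otimes n+1},M)$: $d_{N,N_M}(u)(a)=N(a)\triangleright u-u\triangleleft N(a)-N_M(a\triangleright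 u-u\triangleleft a)$ for $u\in M$; for $n\ge1$, $(d_{N,N_M}f)(a_1,\dots,a_{n+1})=N(a_1)\triangleright f(a_2,\dots,a_{n+1})-(-1)^nf(a_1,\dots,a_n)\triangleleft N(a_{n+1})+\sum_{i=1}^n(-1)^if(a_1,\dots,a_{i-1},N(a_i)a_{i+1}+a_iN(a_{i+1})-N(a_ia_{i+1}),\dots,a_{n+1})-N_M\big((\delta_{\mathrm{Hoch}}f)(a_1,\dots,a_{n+1})\big)$. The map $\partial^{N,N_M}:\mathrm{Hom}(A^{\otimes n},M)\to\mathrm{Hom}(A^{\otimes n},M)$: $\partial^{N,N_M}(u)=u$ for $u\in M$, and for $n\ge1$, $\partial^{N,N_M}(f)(a_1,\dots,a_n)=\sum_{S\subseteq\{1,\dots,n\}}(-1)^{|S|}N_M^{|S|}\big(f(b_1,\dots,b_n)\big)$ where $b_i=a_i$ if $i\in S$ and $b_i=N(a_i)$ if $i\notin S$. *)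

From HB Require Import structures.
From mathcomp Require Import all_boot all_order all_algebra.
Set Implicit Arguments. Unset Strict Implicit. Unset Printing Implicit Defensive.
Import GRing.Theory.
Local Open Scope ring_scope.

Section NijenhuisDefs.
Variables (K : fieldType) (A M : lmodType K).
Variables (mul : A -> A -> A) (lact : A -> M -> M) (ract : M -> A -> M).
Variables (N : A -> A) (NM : M -> M).

Definition linmap (V W : lmodType K) (g : V -> W) :=
  forall (c : K) (x y : V), g (c *: x + y) = c *: g x + g y.

Definition assoc_algebra :=
  [/\ forall a, linmap (mul a),
      forall b, linmap (mul^~ b)
    & forall a b c, mul a (mul b c) = mul (mul a b) c].

Definition bimodule :=
  (forall a, linmap (lact a)) /\
  (forall u, linmap (lact^~ u)) /\
  (forall a, linmap (ract^~ a)) /\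
  (forall u, linmap (ract u)) /\
  (forall a b u, lact (mul a b) u = lact a (lact b u)) /\
  (forall u a b, ract u (mul a b) = ract (ract u a) b) /\
  (forall a u b, ract (lact a u) b = lact a (ract u b)).

Definition nijenhuis_op :=
  forall a b, mul (N a) (N b) = N (mul (N a) b + mul a (N b) - N (mul a b)).

Definition nijenhuis_bimod :=
  (forall a u, lact (N a) (NM u) =
     NM (lact (N a) u + lact a (NM u) - NM (lact a u))) /\
  (forall u a, ract (NM u) (N a) =
     NM (ract (NM u) a + ract u (N a) - NM (ract u a))).

(* n-cochains: maps {ffun 'I_n -> A} -> M (functions of (a_1,...,a_n)),
   required to be multilinear so that they correspond to Hom(A^{(x)n}, M). *)
Definition upd n (a : {ffun 'I_n -> A}) (i : 'I_n) (x : A) : {ffun 'I_n -> A} :=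
  [ffun j => if j == i then x else a j].

Definition multilinear n (f : {ffun 'I_n -> A} -> M) :=
  forall (a : {ffun 'I_n -> A}) (i : 'I_n), linmap (fun x => f (upd a i x)).

Definition ftail n (a : {ffun 'I_n.+1 -> A}) : {ffun 'I_n -> A} :=
  [ffun j => a (lift ord0 j)].
Definition finit n (a : {ffun 'I_n.+1 -> A}) : {ffun 'I_n -> A} :=
  [ffun j => a (widen_ord (leqnSn n) j)].
(* (a_1, ..., a_{i-1}, g a_i a_{i+1}, a_{i+2}, ..., a_{n+1}), 0-based index i *)
Definition fmerge (g : A -> A -> A) n (a : {ffun 'I_n.+1 -> A}) (i : 'I_n)
  : {ffun 'I_n -> A} :=
  [ffun j : 'I_n => if (j < i)%N then a (widen_ord (leqnSn n) j)
             else if j == i then g (a (widen_ord (leqnSn n) j)) (a (lift ord0 j))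
             else a (lift ord0 j)].

(* Hochschild coboundary (for n = 0 this is u |-> (a |-> a|>u - u<|a)) *)
Definition hoch n (f : {ffun 'I_n -> A} -> M) : {ffun 'I_n.+1 -> A} -> M :=
  fun a =>
    lact (a ord0) (f (ftail a))
    + \sum_(i < n) (-1) ^+ i.+1 *: f (fmerge mul a i)
    + (-1) ^+ n.+1 *: ract (f (finit a)) (a ord_max).

Definition nij_bracket (x y : A) : A := mul (N x) y + mul x (N y) - N (mul x y).

Definition dNN n (f : {ffun 'I_n -> A} -> M) : {ffun 'I_n.+1 -> A} -> M :=
  fun a =>
    lact (N (a ord0)) (f (ftail a))
    - (-1) ^+ n *: ract (f (finit a)) (N (a ord_max))
    + \sum_(i < n) (-1) ^+ i.+1 *: f (fmerge nij_bracket a i)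
    - NM (hoch f a).

Definition partialNN n (f : {ffun 'I_n -> A} -> M) : {ffun 'I_n -> A} -> M :=
  fun a =>
    \sum_(S : {set 'I_n})
      (-1) ^+ #|S| *: iter #|S| NM (f [ffun i => if i \in S then a i else N (a i)]).

End NijenhuisDefs.

From HB Require Import structures.
From mathcomp Require Import all_boot all_order all_algebra.
Set Implicit Arguments. Unset Strict Implicit. Unset Printing Implicit Defensive.
Import GRing.Theory.
Local Open Scope ring_scope.

(* Write E_k := (-1)^k N_M^k, so that (∂f)(a) is the sum over the subsets S of
   E_|S| applied to f with N inserted at the arguments outside S.  Both sides of
   the identity are then compared term by term, splitting the sums over subsets
   of {1,...,n+1} according to the indices the term involves.  For the outer
   terms a_1 ▷ _ and _ ◁ a_(n+1) the subsets S and S ∪ {k} combine through the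
   Nijenhuis bimodule condition, which iterates to all powers of N_M.  For the
   term merging a_i and a_(i+1) the four subsets with the same trace away from
   {i, i+1} combine through N(x)N(y) = N[x,y]_N and [x,y]_N + N(xy) = N(x)y + xN(y). *)

Section LiftedSets.
Variables (n : nat) (k : 'I_n.+1) (T : {set 'I_n}).

Lemma lift_imset_notin : k \notin lift k @: T.
Proof. by apply/imsetP => -[j _ /eqP]; rewrite (negbTE (neq_lift k j)). Qed.

Lemma preimset_lift_imset : lift k @^-1: (lift k @: T) = T.
Proof. by apply/setP => j; rewrite inE (mem_imset _ _ (@lift_inj _ k)). Qed.

Lemma preimset_lift_setU1 : lift k @^-1: (k |: lift k @: T) = T.
Proof.
apply/setP => j.
by rewrite !inE (mem_imset _ _ (@lift_inj _ k)) eq_sym (negbTE (neq_lift k j)).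
Qed.

Lemma card_lift_imset : #|lift k @: T| = #|T|.
Proof. by rewrite card_imset //; apply: lift_inj. Qed.

Lemma card_lift_setU1 : #|k |: lift k @: T| = #|T|.+1.
Proof. by rewrite cardsU1 lift_imset_notin card_lift_imset. Qed.

End LiftedSets.

Section SubsetSums.
Variable V : nmodType.

Lemma big_set_splitU1 (X : finType) (k : X) (F : {set X} -> V) :
  \sum_(S : {set X}) F S = \sum_(S : {set X} | k \notin S) (F S + F (k |: S)).
Proof.
rewrite (bigID (fun S : {set X} => k \in S)) /= big_split /= addrC; congr (_ + _).
rewrite (reindex_onto (fun S => k |: S) (fun S => S :\ k)) => [|S kS]; last exact: setD1K.
apply: eq_bigl => S; rewrite setU11 /=.
by apply/eqP/idP => [<-|kS]; [rewrite setD11 | rewrite setU1K].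
Qed.

Lemma big_set_lift n (k : 'I_n.+1) (F : {set 'I_n.+1} -> V) :
  \sum_(S : {set 'I_n.+1}) F S
  = \sum_(T : {set 'I_n}) (F (lift k @: T) + F (k |: lift k @: T)).
Proof.
rewrite (big_set_splitU1 k) (reindex (fun T : {set 'I_n} => lift k @: T)) /=.
  by apply: eq_bigl => T; rewrite lift_imset_notin.
exists (fun S : {set 'I_n.+1} => [set j : 'I_n | lift k j \in S]) => [T _|S].
  by apply/setP => j; rewrite inE (mem_imset _ _ (@lift_inj _ k)).
rewrite inE => kS.
apply/setP => x; apply/imsetP/idP => [[j]|xS]; first by rewrite inE => ? ->.
have kx : k != x by apply: contraNneq kS => ->.
have [j xj _] := unlift_some kx.
by exists j; rewrite // inE -xj.
Qed.

End SubsetSums.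

Section FfunSurgery.
Variables (K : fieldType) (A : lmodType K) (N : A -> A).

Definition fdrop n (k : 'I_n.+1) (a : {ffun 'I_n.+1 -> A}) : {ffun 'I_n -> A} :=
  [ffun j => a (lift k j)].

Definition apply_outside n (S : {set 'I_n}) (a : {ffun 'I_n -> A}) : {ffun 'I_n -> A} :=
  [ffun i => if i \in S then a i else N (a i)].

Lemma ftail_fdrop n (a : {ffun 'I_n.+1 -> A}) : ftail a = fdrop ord0 a.
Proof. by []. Qed.

Lemma finit_fdrop n (a : {ffun 'I_n.+1 -> A}) : finit a = fdrop ord_max a.
Proof.
apply/ffunP => j; rewrite !ffunE; congr (a _); apply: val_inj.
by rewrite /= /bump leqNgt ltn_ord.
Qed.

Lemma fmergeE (g : A -> A -> A) n (a : {ffun 'I_n.+1 -> A}) (i : 'I_n) :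
  fmerge g a i = upd (fdrop (widen_ord (leqnSn n) i) a) i
    (g (a (widen_ord (leqnSn n) i)) (fdrop (widen_ord (leqnSn n) i) a i)).
Proof.
apply/ffunP => j; rewrite !ffunE.
case: ltngtP => [ji|ij|/val_inj ->].
- rewrite -val_eqE (ltn_eqF ji); congr (a _); apply: val_inj.
  by rewrite /= /bump leqNgt ji.
- rewrite -val_eqE (gtn_eqF ij); congr (a _); apply: val_inj.
  by rewrite /= /bump (ltnW ij).
- rewrite eqxx; congr (g _ (a _)); apply: val_inj.
  by rewrite /= /bump leqnn.
Qed.

Lemma fdrop_apply_outside n (k : 'I_n.+1) (S : {set 'I_n.+1}) (a : {ffun 'I_n.+1 -> A}) :
  fdrop k (apply_outside S a) = apply_outside (lift k @^-1: S) (fdrop k a).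
Proof. by apply/ffunP => j; rewrite !ffunE inE. Qed.

Lemma apply_outside_upd n (T : {set 'I_n}) (b : {ffun 'I_n -> A}) i z :
  apply_outside T (upd b i z) = upd (apply_outside T b) i (if i \in T then z else N z).
Proof. by apply/ffunP => j; rewrite !ffunE; case: eqVneq => [->|]. Qed.

Lemma upd_apply_outside_setU1 n (T : {set 'I_n}) (b : {ffun 'I_n -> A}) i z :
  upd (apply_outside (i |: T) b) i z = upd (apply_outside T b) i z.
Proof. by apply/ffunP => j; rewrite !ffunE in_setU1; case: eqVneq. Qed.

End FfunSurgery.

Section NijenhuisCochains.
Variables (K : fieldType) (A M : lmodType K) (N : A -> A) (NM : M -> M).
Hypothesis NM_linear : linmap NM.

HB.instance Definition _ := GRing.isLinear.Build K M M *:%R NM NM_linear.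

Definition signed_iter k (u : M) : M := (-1) ^+ k *: iter k NM u.

Lemma iter_linear k : linmap (iter k NM).
Proof. by elim: k => [|k IH] c x y //=; rewrite IH linearP. Qed.

Lemma signed_iter_linear k : linmap (signed_iter k).
Proof. by move=> c x y; rewrite /signed_iter iter_linear scalerDr !scalerA mulrC. Qed.

HB.instance Definition _ k :=
  GRing.isLinear.Build K M M *:%R (signed_iter k) (signed_iter_linear k).

Lemma signed_iterS k u : signed_iter k.+1 u = - signed_iter k (NM u).
Proof. by rewrite /signed_iter iterSr exprS mulN1r scaleNr. Qed.

Lemma NM_signed_iter k u : NM (signed_iter k u) = signed_iter k (NM u).
Proof. by rewrite /signed_iter linearZ /= -iterS iterSr. Qed.

Lemma partialNNE n (f : {ffun 'I_n -> A} -> M) a :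
  partialNN N NM f a = \sum_(S : {set 'I_n}) signed_iter #|S| (f (apply_outside N S a)).
Proof. by []. Qed.

Section Intertwining.
Variables phi psi : M -> M.
Hypotheses (phi_linear : linmap phi) (psi_linear : linmap psi).
Hypothesis psi_NM : forall u, psi (NM u) = NM (psi u + phi (NM u) - NM (phi u)).

HB.instance Definition _ := GRing.isLinear.Build K M M *:%R phi phi_linear.
HB.instance Definition _ := GRing.isLinear.Build K M M *:%R psi psi_linear.

Lemma iter_intertwine k u :
  psi (iter k NM u) - NM (phi (iter k NM u)) = iter k NM (psi u - NM (phi u)).
Proof. by elim: k => [|k IH] //=; rewrite psi_NM -IH -linearB /= addrAC addrK. Qed.

Lemma signed_iter_intertwine k u :
  psi (signed_iter k u) - NM (phi (signed_iter k u)) = signed_iter k (psi u - NM (phi u)).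
Proof. by rewrite /signed_iter !linearZ /= -scalerDr iter_intertwine. Qed.

End Intertwining.

Section OuterTerm.
Variable B : A -> M -> M.
Hypothesis B_linear : forall x, linmap (B x).
Hypothesis B_nijenhuis :
  forall x u, B (N x) (NM u) = NM (B (N x) u + B x (NM u) - NM (B x u)).

HB.instance Definition _ x := GRing.isLinear.Build K M M *:%R (B x) (B_linear x).

Lemma dNN_outer_term n (f : {ffun 'I_n -> A} -> M) (a : {ffun 'I_n.+1 -> A}) (k : 'I_n.+1) :
  B (N (a k)) (partialNN N NM f (fdrop k a)) - NM (B (a k) (partialNN N NM f (fdrop k a)))
  = \sum_(S : {set 'I_n.+1})
      signed_iter #|S| (B (apply_outside N S a k) (f (fdrop k (apply_outside N S a)))).
Proof.
rewrite (big_set_lift k) partialNNE !raddf_sum -big_split; apply: eq_bigr => T _ /=.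
rewrite !fdrop_apply_outside preimset_lift_imset preimset_lift_setU1 !ffunE.
rewrite (negbTE (lift_imset_notin k T)) setU11 card_lift_imset card_lift_setU1.
by rewrite signed_iterS -linearB (signed_iter_intertwine (B_linear _)).
Qed.

End OuterTerm.

Section Coboundary.
Variable mul : A -> A -> A.
Hypothesis N_nijenhuis : nijenhuis_op mul N.

Lemma signed_iter_bracket (G : {linear A -> M}) t x y :
  signed_iter t (G (N (nij_bracket mul N x y))) - NM (signed_iter t (G (N (mul x y))))
  + (signed_iter t.+1 (G (nij_bracket mul N x y)) - NM (signed_iter t.+1 (G (mul x y))))
  = signed_iter t (G (mul (N x) (N y))) + signed_iter t.+1 (G (mul x (N y)))
    + (signed_iter t.+1 (G (mul (N x) y)) + signed_iter t.+2 (G (mul x y))).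
Proof.
rewrite !NM_signed_iter !signed_iterS !opprK N_nijenhuis -/(nij_bracket mul N x y).
rewrite -!addrA; congr (_ + _); rewrite !addrA; congr (_ + _).
rewrite -!opprD -!raddfD; congr (- signed_iter t (NM (G _))).
by rewrite /nij_bracket addrC subrK addrC.
Qed.

Lemma dNN_inner_term n (f : {ffun 'I_n -> A} -> M) (a : {ffun 'I_n.+1 -> A}) (i : 'I_n) :
  multilinear f ->
  partialNN N NM f (fmerge (nij_bracket mul N) a i) - NM (partialNN N NM f (fmerge mul a i))
  = \sum_(S : {set 'I_n.+1}) signed_iter #|S| (f (fmerge mul (apply_outside N S a) i)).
Proof.
move=> f_multilinear; set k := widen_ord (leqnSn n) i.
rewrite !partialNNE (raddf_sum NM) -sumrB (big_set_splitU1 i).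
rewrite (big_set_lift k) (big_set_splitU1 i); apply: eq_bigr => T iT.
rewrite !fmergeE -/k !apply_outside_upd !fdrop_apply_outside.
rewrite !preimset_lift_setU1 !preimset_lift_imset !upd_apply_outside_setU1 !ffunE.
rewrite (negbTE iT) !setU11 !(negbTE (lift_imset_notin k _)).
rewrite !card_lift_setU1 !card_lift_imset (cardsU1 i T) iT add1n.
pose F : {linear A -> M} :=
  HB.pack (fun z => f (upd (apply_outside N T (fdrop k a)) i z))
    (GRing.isLinear.Build K A M *:%R _ (f_multilinear _ i)).
exact: (signed_iter_bracket F).
Qed.

Lemma dNN_inner_terms n (f : {ffun 'I_n -> A} -> M) (a : {ffun 'I_n.+1 -> A}) :
  multilinear f ->
  \sum_(i < n) (-1) ^+ i.+1 *: partialNN N NM f (fmerge (nij_bracket mul N) a i)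
  - NM (\sum_(i < n) (-1) ^+ i.+1 *: partialNN N NM f (fmerge mul a i))
  = \sum_(S : {set 'I_n.+1})
      signed_iter #|S| (\sum_(i < n) (-1) ^+ i.+1 *: f (fmerge mul (apply_outside N S a) i)).
Proof.
move=> f_multilinear; rewrite (raddf_sum NM) -sumrB.
under [RHS]eq_bigr do rewrite raddf_sum.
rewrite exchange_big /=; apply: eq_bigr => i _.
rewrite linearZ -scalerBr dNN_inner_term // scaler_sumr; apply: eq_bigr => S _.
by rewrite [RHS]linearZ.
Qed.

Variables (lact : A -> M -> M) (ract : M -> A -> M).
Hypothesis lact_linear : forall x, linmap (lact x).
Hypothesis ract_linear : forall x, linmap (ract^~ x).
Hypothesis lact_nijenhuis :
  forall x u, lact (N x) (NM u) = NM (lact (N x) u + lact x (NM u) - NM (lact x u)).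
Hypothesis ract_nijenhuis :
  forall u x, ract (NM u) (N x) = NM (ract (NM u) x + ract u (N x) - NM (ract u x)).

Lemma dNN_partialNN n (f : {ffun 'I_n -> A} -> M) (a : {ffun 'I_n.+1 -> A}) :
  multilinear f ->
  dNN mul lact ract N NM (partialNN N NM f) a = partialNN N NM (hoch mul lact ract f) a.
Proof.
move=> f_multilinear.
have ract_intertwine x u :
    ract (NM u) (N x) = NM (ract u (N x) + ract (NM u) x - NM (ract u x)).
  by rewrite ract_nijenhuis [ract (NM u) x + _]addrC.
have left_term := dNN_outer_term lact_linear lact_nijenhuis f a ord0.
have right_term := dNN_outer_term ract_linear ract_intertwine f a ord_max.
rewrite /dNN [RHS]partialNNE /hoch.
under [RHS]eq_bigr do rewrite !raddfD /= linearZ /= ftail_fdrop finit_fdrop.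
rewrite !big_split /= -scaler_sumr -left_term -right_term -dNN_inner_terms //.
rewrite -ftail_fdrop -finit_fdrop scalerBr !(raddfD NM) /= [NM (_ *: _)]linearZ /=.
rewrite exprS mulN1r !scaleNr.
by rewrite !opprD !addrA [LHS](ACl (1*4*3*5*2*6)).
Qed.

End Coboundary.

End NijenhuisCochains.

Theorem proposition3p11 (K : fieldType) (A M : lmodType K)
  (mul : A -> A -> A) (lact : A -> M -> M) (ract : M -> A -> M)
  (N : A -> A) (NM : M -> M) :
  [pchar K] =i pred0 ->
  assoc_algebra mul ->
  bimodule mul lact ract ->
  linmap N -> nijenhuis_op mul N ->
  linmap NM -> nijenhuis_bimod lact ract N NM ->
  forall (n : nat) (f : {ffun 'I_n -> A} -> M),
    multilinear f ->
    forall a : {ffun 'I_n.+1 -> A},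
      dNN mul lact ract N NM (partialNN N NM f) a
      = partialNN N NM (hoch mul lact ract f) a.
Proof.
move=> _ _ [lact_linear [_ [ract_linear _]]] _ N_nijenhuis NM_linear.
move=> [lact_nijenhuis ract_nijenhuis] n f f_multilinear a.
exact: dNN_partialNN.
Qed.
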